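(* For $n\ge3$, the priority lattice $\Pi(n)$ is not self-dual (it is not isomorphic to its order dual).
   Context: $[n]_0=\{0,\dots,n\}$. A priority forest on $[n]_0$ is a rooted forest with vertex set $[n]_0$ whose component trees $T_0,T_1,\dots$ are increasing (each non-root vertex has a larger label than its parent) and satisfy: for $j<k$ every label of $T_j$ is smaller than every label of $T_k$. The priority lattice $\Pi(n)$ is the set of priority forests on $[n]_0$, ordered by $P\le P'$ iff $E(P)\subseteq E(P')$, together with an extra element $\hat1$ greater than all priority forests. *)

From mathcomp Require Import all_boot.
Set Implicit Arguments. Unset Strict Implicit. Unset Printing Implicit Defensive.

(* Vertex set [n]_0 = {0,...,n} is 'I_n.+1.  A rooted forest on [n]_0 is given by
   its parent function: [par v = None] iff v is a root, [par v = Some u] iff u is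
   the parent of v (edge u -> v). *)
Definition parfun (n : nat) := {ffun 'I_n.+1 -> option 'I_n.+1}.

(* increasing: every non-root vertex has larger label than its parent.
   (This also guarantees acyclicity, so par defines a rooted forest.) *)
Definition increasing n (par : parfun n) : bool :=
  [forall v, if par v is Some u then u < v else true].

Definition step n (par : parfun n) (v : 'I_n.+1) : 'I_n.+1 :=
  if par v is Some u then u else v.

(* the root of the component tree containing v (parent chains strictly
   decrease in an increasing forest, so n+1 steps reach the root) *)
Definition froot n (par : parfun n) (v : 'I_n.+1) : 'I_n.+1 :=
  iter n.+1 (step par) v.

(* component trees can be listed T_0, T_1, ... such that for j < k every label of
   T_j is smaller than every label of T_k; equivalently any two distinct
   components are comparable in this sense. *)
Definition trees_ordered n (par : parfun n) : bool :=
  [forall x, forall y, (froot par x != froot par y) ==>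
     ([forall x', forall y', ((froot par x' == froot par x) &&
                              (froot par y' == froot par y)) ==> (x' < y')] ||
      [forall x', forall y', ((froot par x' == froot par x) &&
                              (froot par y' == froot par y)) ==> (y' < x')])].

Definition priority_forest n (par : parfun n) : bool :=
  increasing par && trees_ordered par.

Definition edges n (par : parfun n) : {set 'I_n.+1 * 'I_n.+1} :=
  [set e | par e.2 == Some e.1].

(* carrier of Pi(n): None is the extra top element \hat 1 *)
Definition in_Pi n (x : option (parfun n)) : bool :=
  if x is Some p then priority_forest p else true.

Definition Pi (n : nat) := {x : option (parfun n) | in_Pi x}.

Definition Pi_le n (x y : Pi n) : bool :=
  match val x, val y with
  | _, None => true
  | None, Some _ => false
  | Some p, Some q => edges p \subset edges q
  end.

Definition Pi_self_dual n : Prop :=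
  exists f : Pi n -> Pi n, bijective f /\ forall x y, Pi_le x y = Pi_le (f y) (f x).

(* Let f be an order-reversing bijection of Pi(n).  It sends coatoms to atoms,
   so Pi(n) has at least as many atoms as coatoms.  But an atom lies above
   some forest consisting of a single edge k -> k+1 (the first vertex with a
   parent is attached to its predecessor, otherwise the trees would
   interleave), so there are at most n atoms; while every increasing spanning
   tree rooted at 0 is a coatom, and for n >= 3 there are at least n+1 of
   them. *)

From HB Require Import structures.
From mathcomp Require Import all_boot zify.
(* Imported last so that [froot] is the forest root of Defs, not fingraph's. *)
From Pilot Require Import Defs.

Set Implicit Arguments. Unset Strict Implicit. Unset Printing Implicit Defensive.

Section AtomsCoatoms.

Variables (T : finType) (le : rel T).

Definition least x := [forall z, le x z].
Definition greatest x := [forall z, le z x].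
Definition atom x := ~~ least x && [forall y, le y x ==> (y == x) || least y].
Definition coatom x := ~~ greatest x && [forall y, le x y ==> (y == x) || greatest y].

Variable f : T -> T.
Hypotheses (f_bij : bijective f) (f_anti : forall x y, le x y = le (f y) (f x)).

Lemma anti_greatest_least x : greatest x = least (f x).
Proof.
have [g fK gK] := f_bij.
apply/forallP/forallP => [x_max z | fx_min z]; last by rewrite f_anti.
by rewrite -(gK z) -f_anti.
Qed.

Lemma anti_coatom_atom c : coatom c -> atom (f c).
Proof.
have [g fK gK] := f_bij.
case/andP=> c_not_max c_cover; rewrite /atom -anti_greatest_least c_not_max /=.
apply/forallP => y; rewrite -(gK y) -f_anti -anti_greatest_least (inj_eq (can_inj fK)).
exact: (forallP c_cover).
Qed.

Lemma card_coatoms_le_atoms : #|[set x | coatom x]| <= #|[set x | atom x]|.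
Proof.
rewrite -(card_imset _ (bij_inj f_bij)); apply/subset_leq_card/subsetP => y.
case/imsetP=> c; rewrite inE => /anti_coatom_atom atom_fc ->; by rewrite inE.
Qed.

End AtomsCoatoms.

Section Roots.

Variables (n : nat) (p : parfun n).

Lemma iter_step_root v k : p v = None -> iter k (step p) v = v.
Proof. by move=> v_root; elim: k => //= k ->; rewrite /step v_root. Qed.

Lemma froot_root v : p v = None -> froot p v = v.
Proof. exact: iter_step_root. Qed.

Lemma froot_child v u : p v = Some u -> p u = None -> froot p v = u.
Proof. by move=> pv u_root; rewrite /froot iterSr {2}/step pv iter_step_root. Qed.

Lemma trees_ordered_homo : {homo froot p : x y / x <= y} -> trees_ordered p.
Proof.
move=> froot_homo; apply/'forall_forallP => x y; apply/implyP => rx_neq_ry.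
have ordered_from (a b : 'I_n.+1) : froot p a < froot p b ->
    [forall x', forall y', (froot p x' == froot p a) && (froot p y' == froot p b)
                           ==> (x' < y')].
  move=> ra_lt_rb; apply/'forall_forallP => x' y'.
  apply/implyP => /andP[/eqP rx' /eqP ry']; rewrite ltnNge; apply/negP.
  by move=> /froot_homo; rewrite rx' ry' leqNgt ra_lt_rb.
case: (ltngtP (froot p x) (froot p y)) => [/ordered_from -> //|/ordered_from rel_yx|].
- apply/orP; right; apply/'forall_forallP => x' y'.
  by rewrite andbC; exact: (forallP (forallP rel_yx y')).
- by move=> /val_inj rx_ry; rewrite rx_ry eqxx in rx_neq_ry.
Qed.

Lemma trees_ordered_interleave a b c : trees_ordered p ->
  froot p a = froot p c -> froot p b != froot p a -> a < b < c -> False.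
Proof.
move=> ordered ra_rc rb_neq /andP[a_lt_b b_lt_c].
have := implyP (forallP (forallP ordered a) b); rewrite eq_sym => /(_ rb_neq).
case/orP=> /'forall_forallP sep.
- by have := implyP (sep c b); rewrite ra_rc !eqxx ltnNge ltnW // => /(_ isT).
- by have := implyP (sep a b); rewrite !eqxx ltnNge ltnW // => /(_ isT).
Qed.

Hypothesis p_inc : increasing p.

Lemma parent_lt v u : p v = Some u -> u < v.
Proof. by move=> pv; have := forallP p_inc v; rewrite pv. Qed.

Lemma froot_is_root v : p (froot p v) = None.
Proof.
have descent k : p (iter k (step p) v) = None \/ k + iter k (step p) v <= v.
  elim: k => [|k [root_k | IH]] /=; first by right.
  - by left; rewrite {1}/step root_k.
  - move: IH; set w := iter k (step p) v => IH; rewrite /step.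
    case pw: (p w) => [u|]; last by left.
    by right; have := parent_lt pw; lia.
case: (descent n.+1) => // too_long; have := ltn_ord v; lia.
Qed.

Definition spanning := forall v : 'I_n.+1, 0 < v -> p v != None.

Lemma froot_spanning : spanning -> forall v, froot p v = ord0.
Proof.
move=> p_span v; apply: val_inj => /=; apply/eqP; rewrite eqn0Ngt.
by apply/negP => /p_span; rewrite froot_is_root.
Qed.

End Roots.

Lemma priority_forest_consecutive_edge n (p : parfun n) v : priority_forest p ->
  p v != None -> exists k : 'I_n, p (inord k.+1) = Some (inord k).
Proof.
case/andP=> p_inc ordered has_parent.
case: (@arg_minnP _ v (fun w => p w != None) val has_parent).
move=> {has_parent}v + v_first.
case pv: (p v) => [u|] // _.
have u_lt_v := parent_lt p_inc pv.
have below_v_root (w : 'I_n.+1) : w < v -> p w = None.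
  by move=> w_lt_v; apply: contraTeq w_lt_v => /v_first; rewrite -leqNgt.
have v_succ_u : v = u.+1 :> nat.
  apply/eqP; rewrite eqn_leq u_lt_v andbT leqNgt; apply/negP => gap.
  have w_bound : u.+1 < n.+1 by have := ltn_ord v; lia.
  pose w := Ordinal w_bound.
  have w_root : p w = None by apply: below_v_root.
  have ru : froot p u = u := froot_root (below_v_root _ u_lt_v).
  apply: (@trees_ordered_interleave _ _ u w v ordered).
  - by rewrite ru (froot_child pv (below_v_root _ u_lt_v)).
  - by rewrite froot_root // ru; apply/negP => /eqP/(congr1 val) /=; lia.
  - by rewrite /= ltnSn.
have u_bound : u < n by have := ltn_ord v; lia.
by exists (Ordinal u_bound); rewrite /= -v_succ_u !inord_val.
Qed.

HB.instance Definition _ n := Finite.copy (Pi n) {x : option (parfun n) | in_Pi x}.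

Section Elements.

Variable n : nat.

Definition Pi_forest (p : parfun n) (p_forest : priority_forest p) : Pi n :=
  exist _ (Some p) p_forest.

Definition Pi_top : Pi n := exist _ None isT.

Definition forest_of_nat (g : nat -> option nat) : parfun n :=
  [ffun v : 'I_n.+1 => omap inord (g v)].

Lemma increasing_forest_of_nat g :
  (forall v u, g v = Some u -> u < v) -> increasing (forest_of_nat g).
Proof.
move=> g_dec; apply/forallP => v; rewrite ffunE.
case gv: (g v) => [u|] //=; have := g_dec _ _ gv; have := ltn_ord v.
by move=> v_bound u_lt_v; rewrite inordK; lia.
Qed.

Lemma forest_of_nat_inj g g' v : v <= n ->
    (forall u, g v = Some u -> u <= n) -> (forall u, g' v = Some u -> u <= n) ->
  forest_of_nat g = forest_of_nat g' -> g v = g' v.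
Proof.
move=> v_bound g_bound g'_bound /(congr1 (fun p : parfun n => p (inord v))).
rewrite !ffunE inordK //.
case: (g v) g_bound => [u|]; case: (g' v) g'_bound => [u'|] //= bu' bu.
case=> /(congr1 (@nat_of_ord _)).
by rewrite !inordK ?ltnS ?(bu _ erefl) ?(bu' _ erefl) // => ->.
Qed.

Definition empty_forest : parfun n := forest_of_nat (fun _ => None).

Lemma empty_forest_priority : priority_forest empty_forest.
Proof.
rewrite /priority_forest increasing_forest_of_nat //; apply: trees_ordered_homo.
by move=> x y; rewrite !froot_root // ffunE.
Qed.

Definition Pi_bot : Pi n := Pi_forest empty_forest_priority.

Definition edge_forest (k : 'I_n) : parfun n :=
  forest_of_nat (fun v => if v == k.+1 then Some (val k) else None).

Lemma froot_edge_forest (k : 'I_n) x :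
  froot (edge_forest k) x = if val x == k.+1 then inord k else x.
Proof.
have k_bound : k < n.+1 by have := ltn_ord k; lia.
have k_root : edge_forest k (inord k) = None.
  by rewrite ffunE inordK // ifN_eq //; lia.
case: eqP => [x_succ | x_other]; last first.
  by rewrite froot_root // ffunE ifN_eq //; apply/eqP.
by apply: froot_child k_root; rewrite ffunE x_succ eqxx.
Qed.

Lemma edge_forest_priority k : priority_forest (edge_forest k).
Proof.
rewrite /priority_forest increasing_forest_of_nat; last first.
  by move=> v u; case: eqP => // -> [<-].
apply: trees_ordered_homo => x y x_le_y; rewrite !froot_edge_forest.
have k_bound : k < n.+1 by have := ltn_ord k; lia.
by case: eqP; case: eqP => /=; rewrite ?inordK //; lia.
Qed.

Definition Pi_edge k : Pi n := Pi_forest (edge_forest_priority k).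

Lemma Pi_edge_not_bot k : ~~ Pi_le (Pi_edge k) Pi_bot.
Proof.
have succ_bound : k.+1 < n.+1 by rewrite ltnS.
apply/subsetP => /(_ (inord k, inord k.+1)); rewrite !inE !ffunE /= inordK //.
by rewrite eqxx => /(_ (eqxx _)).
Qed.

Lemma Pi_edge_le (k : 'I_n) (p : parfun n) (p_forest : priority_forest p) :
  p (inord k.+1) = Some (inord k) -> Pi_le (Pi_edge k) (Pi_forest p_forest).
Proof.
move=> p_edge; apply/subsetP => -[a b]; rewrite !inE ffunE /=.
case: (val b =P k.+1) => //= b_succ /eqP[<-].
by rewrite -b_succ inord_val in p_edge; rewrite p_edge.
Qed.

Lemma atom_Pi_edge a : 0 < n -> atom (@Pi_le n) a -> exists k, a = Pi_edge k.
Proof.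
move=> n_gt0 /andP[a_not_bot a_cover].
have [k k_le_a] : exists k, Pi_le (Pi_edge k) a.
  case: a a_not_bot {a_cover} => -[p|] p_forest a_not_bot.
    2: by exists (Ordinal n_gt0).
  have [v pv] : exists v, p v != None.
    apply/existsP; apply: contraR a_not_bot => /existsPn no_edge.
    apply/forallP => -[[q|] q_forest] //; apply/subsetP => -[x y].
    by rewrite inE /= (eqP (negPn (no_edge y))).
  have [k p_edge] := priority_forest_consecutive_edge p_forest pv.
  by exists k; apply: Pi_edge_le.
exists k; case/orP: (implyP (forallP a_cover _) k_le_a) => [/eqP // | /forallP].
by move/(_ Pi_bot); rewrite (negbTE (Pi_edge_not_bot k)).
Qed.

Lemma card_atoms_Pi : 0 < n -> #|[set a | atom (@Pi_le n) a]| <= n.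
Proof.
move=> n_gt0; apply: (@leq_trans #|[set Pi_edge k | k : 'I_n]|).
  apply/subset_leq_card/subsetP => a; rewrite inE => /(atom_Pi_edge n_gt0)[k ->].
  exact: imset_f.
by apply: leq_trans (leq_imset_card _ _) _; rewrite card_ord.
Qed.

End Elements.

Section Coatoms.

Variable n : nat.

Lemma spanning_priority_forest (p : parfun n) :
  increasing p -> spanning p -> priority_forest p.
Proof.
move=> p_inc p_span; rewrite /priority_forest p_inc; apply: trees_ordered_homo.
by move=> x y _; rewrite !froot_spanning.
Qed.

Lemma coatom_spanning (p : parfun n) (p_forest : priority_forest p) :
  spanning p -> coatom (@Pi_le n) (Pi_forest p_forest).
Proof.
move=> p_span; apply/andP; split; first by apply/negP => /forallP/(_ (Pi_top n)).
apply/forallP => -[[q|] q_forest]; apply/implyP => p_le_q; apply/orP; last first.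
  by right; apply/forallP => -[[r|] ?].
left; apply/eqP/val_inj; congr Some; apply/ffunP => v.
have [/andP[p_inc _] /andP[q_inc _]] := (p_forest, q_forest).
case: (posnP v) => [v0 | /p_span].
  case pv: (p v) => [u|]; first by have := parent_lt p_inc pv; rewrite v0.
  by case qv: (q v) => [u|] //; have := parent_lt q_inc qv; rewrite v0.
case pv: (p v) => [u|] // _.
have uv_edge : (u, v) \in edges p by rewrite inE /= pv.
by have := subsetP p_le_q _ uv_edge; rewrite inE /= => /eqP.
Qed.

Definition tree_parent (j v : nat) : option nat :=
  if v == 0 then None
  else if j == n then Some (if v == 1 then 0 else 1)
  else Some (if v <= j.+1 then 0 else v.-1).

Lemma tree_parent_lt j v u : tree_parent j v = Some u -> u < v.
Proof.
rewrite /tree_parent; case: eqP => // v_pos; case: eqP => _ [<-].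
  by case: eqP; lia.
by case: ifP; lia.
Qed.

Lemma tree_parent_separates j j' : 3 <= n -> j < j' <= n ->
  exists2 v, v <= n & tree_parent j v != tree_parent j' v.
Proof.
move=> n_ge3 /andP[j_lt_j' j'_le_n].
have j_neq_n : (j == n) = false by lia.
case: (j' =P n) => [j'_n | j'_neq_n].
  by exists 3 => //; rewrite /tree_parent /= j_neq_n j'_n eqxx; case: leqP.
exists j'.+1; first by lia.
rewrite /tree_parent /= j_neq_n (introF eqP j'_neq_n) leqnn ifN; last by lia.
by apply/eqP => -[]; lia.
Qed.

Definition spanning_tree (j : 'I_n.+1) : parfun n := forest_of_nat n (tree_parent j).

Lemma spanning_tree_spanning j : spanning (spanning_tree j).
Proof.
move=> v; rewrite lt0n => /negbTE v_neq0.
by rewrite ffunE /tree_parent v_neq0; case: ifP.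
Qed.

Lemma spanning_tree_priority j : priority_forest (spanning_tree j).
Proof.
apply: spanning_priority_forest (spanning_tree_spanning j).
exact/increasing_forest_of_nat/tree_parent_lt.
Qed.

Definition Pi_tree j : Pi n := Pi_forest (spanning_tree_priority j).

Lemma Pi_tree_inj : 3 <= n -> injective Pi_tree.
Proof.
move=> n_ge3.
have tree_neq (j j' : 'I_n.+1) : j < j' -> spanning_tree j != spanning_tree j'.
  move=> j_lt_j'; have j'_le_n : j' <= n by rewrite -ltnS.
  have [v v_le_n] := tree_parent_separates n_ge3 (introT andP (conj j_lt_j' j'_le_n)).
  have parent_bound (i : 'I_n.+1) u : tree_parent i v = Some u -> u <= n.
    by move/tree_parent_lt; lia.
  apply: contra => /eqP/(forest_of_nat_inj v_le_n (parent_bound j) (parent_bound j')).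
  by move->.
move=> j j' Pi_tree_eq.
have /eqP same_tree : spanning_tree j = spanning_tree j' by case: Pi_tree_eq.
case: (ltngtP j j') => [/tree_neq | /tree_neq | /val_inj //].
  by rewrite same_tree.
by rewrite eq_sym same_tree.
Qed.

Lemma card_coatoms_Pi : 3 <= n -> n.+1 <= #|[set c | coatom (@Pi_le n) c]|.
Proof.
move=> n_ge3; rewrite -{1}(card_ord n.+1) -(card_imset _ (Pi_tree_inj n_ge3)).
apply/subset_leq_card/subsetP => _ /imsetP[j _ ->]; rewrite inE.
exact/coatom_spanning/spanning_tree_spanning.
Qed.

End Coatoms.

Theorem corollary5p2 (n : nat) : 3 <= n -> ~ Pi_self_dual n.
Proof.
move=> n_ge3 [f [f_bij f_anti]].
have := card_coatoms_le_atoms f_bij f_anti.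
have := card_atoms_Pi (ltnW (ltnW n_ge3)).
have := card_coatoms_Pi n_ge3.
lia.
Qed.
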